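(* Let $\boldsymbol{x}=[i,v]^{\intercal}$ be any solution of the switched system, and let $\boldsymbol{x}_p=[i_p,v_p]^{\intercal}$ be its unique $T$-periodic solution. Then the averages $\langle v\rangle$ and $\langle i\rangle$ exist, and $$\langle v\rangle=\tfrac12\bigl(v_p(0)+v_p(T/2)\bigr)=\frac{V_{dc}}{2},$$ $$\langle i\rangle=\frac{2C}{T}\bigl(V_{dc}-2v_p(0)\bigr),$$ and $$\Bigl|\langle i\rangle-\frac{V_{dc}}{2R}\Bigr|\le\frac{T}{2RC}\max_{t\in[0,T/2]}|i_p(t)| .$$
   Context: Let $R,L,C,V_{dc},T>0$. Let $\boldsymbol{x}(t)=[i(t),v(t)]^{\intercal}$. Define $$A_1=\begin{bmatrix}-\frac RL & -\frac1L\\ \frac1C & 0\end{bmatrix},\quad A_2=\begin{bmatrix}-\frac RL & \frac1L\\ -\frac1C & 0\end{bmatrix},\quad \boldsymbol{b}_1=\begin{bmatrix}\frac{V_{dc}}L\\ 0\end{bmatrix}.$$ The switched system on $t\ge0$ is: $\boldsymbol{x}'=A_1\boldsymbol{x}+\boldsymbol{b}_1$ on each interval $[(k-1)T,(k-1)T+\frac T2]$ and $\boldsymbol{x}'=A_2\boldsymbol{x}$ on each interval $[(k-1)T+\frac T2,kT]$, $k=1,2,\dots$; solutions are continuous functions on $[0,\infty)$. The system has a unique $T$-periodic solution $\boldsymbol{x}_p$, with $\boldsymbol{x}_p(0)=\left(I-\mathrm{e}^{\frac{T}{2}A_2}\mathrm{e}^{\frac{T}{2}A_1}\right)^{-1}\mathrm{e}^{\frac{T}{2}A_2}A_1^{-1}\left(\mathrm{e}^{\frac{T}{2}A_1}-I\right)\boldsymbol{b}_1$.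 For a function $f$ on $[0,\infty)$, its average is $\langle f\rangle=\lim_{\tau\to\infty}\frac1\tau\int_0^\tau f(t)\,dt$. *)

From Stdlib Require Import Reals Lra.
Open Scope R_scope.

Definition cont_nonneg (f : R -> R) : Prop :=
  forall t, 0 <= t -> limit1_in f (fun s => 0 <= s) (f t) t.

(* Solution of the switched system, x = [i, v]^T, on [0, +oo):
   continuous on [0,+oo); on the interior of each interval
   [(k-1)T, (k-1)T + T/2] it solves x' = A1 x + b1, and on the interior of
   each [(k-1)T + T/2, kT] it solves x' = A2 x.  (k = 1,2,... is written
   via m = k-1 : nat.) *)
Definition is_solution (Rr L C Vdc T : R) (i v : R -> R) : Prop :=
  cont_nonneg i /\ cont_nonneg v /\
  (forall (m : nat) (t : R), INR m * T < t < INR m * T + T / 2 ->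
     derivable_pt_lim i t (- (Rr / L) * i t - (1 / L) * v t + Vdc / L) /\
     derivable_pt_lim v t ((1 / C) * i t)) /\
  (forall (m : nat) (t : R), INR m * T + T / 2 < t < INR m * T + T ->
     derivable_pt_lim i t (- (Rr / L) * i t + (1 / L) * v t) /\
     derivable_pt_lim v t (- (1 / C) * i t)).

Definition is_periodic_solution (Rr L C Vdc T : R) (ip vp : R -> R) : Prop :=
  is_solution Rr L C Vdc T ip vp /\
  (forall t, 0 <= t -> ip (t + T) = ip t /\ vp (t + T) = vp t).

Definition is_integral (f : R -> R) (a b l : R) : Prop :=
  exists pr : Riemann_integrable f a b, RiemannInt pr = l.

Definition has_average (f : R -> R) (a : R) : Prop :=
  (forall tau, 0 < tau -> exists l, is_integral f 0 tau l) /\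
  (forall eps, 0 < eps -> exists M, forall tau l, M < tau -> 0 < tau ->
      is_integral f 0 tau l -> Rabs (l / tau - a) < eps).

(* The difference of two solutions solves the homogeneous switched system, whose
   energy L i^2/2 + C v^2/2 is nonincreasing with dissipation rate R i^2.  As the
   current is uniformly Lipschitz on each half-period, finite total dissipation forces
   the current to tend to 0; the first equation then makes the voltage small at some
   late time, so the energy, and with it the whole difference, tends to 0.  Hence every
   solution has the averages of the periodic one.  The periodic solution is invariant
   under (i, v)(t) -> (i, Vdc - v)(t + T/2), and integrating both subsystems over a
   period with this symmetry gives its averages.  The deviation bound holds because on
   the first half-period the voltage stays within (T / 4C) max |i_p| of Vdc / 2. *)

From Stdlib Require Import Reals Lra Lia ZArith Classical.
Open Scope R_scope.

Lemma derivable_pt_lim_val f x l l' :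
  l = l' -> derivable_pt_lim f x l -> derivable_pt_lim f x l'.
Proof. now intros ->. Qed.

Lemma derivable_pt_lim_shift f t p l :
  derivable_pt_lim f (t + p) l -> derivable_pt_lim (fun s => f (s + p)) t l.
Proof.
  intros H eps Heps. destruct (H eps Heps) as [d Hd]. exists d. intros k Hk Hkd.
  replace (t + k + p) with (t + p + k) by ring. now apply Hd.
Qed.

Lemma continuity_pt_shift f t p :
  continuity_pt f (t + p) -> continuity_pt (fun s => f (s + p)) t.
Proof.
  intros H. apply (continuity_pt_comp (fun s => s + p) f); [|exact H].
  apply continuity_pt_plus; [apply derivable_continuous_pt, derivable_pt_id|].
  now apply continuity_pt_const.
Qed.

Lemma derivable_pt_lim_lincomb f g x a b c lf lg :
  derivable_pt_lim f x lf -> derivable_pt_lim g x lg ->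
  derivable_pt_lim (fun t => a * t + b * f t + c * g t) x (a + b * lf + c * lg).
Proof.
  intros Hf Hg.
  assert (H := derivable_pt_lim_plus _ _ x _ _
    (derivable_pt_lim_plus _ _ x _ _
       (derivable_pt_lim_scal id a x 1 (derivable_pt_lim_id x))
       (derivable_pt_lim_scal f b x lf Hf))
    (derivable_pt_lim_scal g c x lg Hg)).
  unfold plus_fct, mult_real_fct, id in H. eapply derivable_pt_lim_val; [|exact H]. ring.
Qed.

Lemma continuity_pt_lincomb f g x a b c :
  continuity_pt f x -> continuity_pt g x ->
  continuity_pt (fun t => a * t + b * f t + c * g t) x.
Proof.
  intros Hf Hg.
  exact (continuity_pt_plus _ _ x
    (continuity_pt_plus _ _ x
       (continuity_pt_scal id a x (derivable_continuous_pt _ _ (derivable_pt_id x)))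
       (continuity_pt_scal f b x Hf))
    (continuity_pt_scal g c x Hg)).
Qed.

Lemma MVT_lim (f g : R -> R) a b : a < b ->
  (forall x, a <= x <= b -> continuity_pt f x) ->
  (forall x, a < x < b -> derivable_pt_lim f x (g x)) ->
  exists c, a < c < b /\ f b - f a = g c * (b - a).
Proof.
  intros Hab Hc Hd.
  pose (pr := fun c (P : a < c < b) =>
    exist (fun l => derivable_pt_abs f c l) (g c) (Hd c P)).
  destruct (MVT f id a b pr (fun c _ => derivable_pt_id c) Hab Hc
     (fun c _ => derivable_continuous_pt _ _ (derivable_pt_id c))) as [c [Pc Hc']].
  exists c; split; [exact Pc|].
  rewrite derive_pt_id in Hc'. simpl in Hc'. unfold id in Hc'. lra.
Qed.

Lemma MVT_abs_le (f g : R -> R) a b K : a <= b ->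
  (forall x, a <= x <= b -> continuity_pt f x) ->
  (forall x, a < x < b -> derivable_pt_lim f x (g x)) ->
  (forall x, a < x < b -> Rabs (g x) <= K) ->
  Rabs (f b - f a) <= K * (b - a).
Proof.
  intros Hab Hc Hd HK. destruct (Req_dec a b) as [->|Hne].
  - replace (f b - f b) with 0 by ring. rewrite Rabs_R0. lra.
  - destruct (MVT_lim f g a b) as [c [Pc ->]]; auto; [lra|].
    rewrite Rabs_mult, (Rabs_right (b - a)) by lra.
    apply Rmult_le_compat_r; [lra | now apply HK].
Qed.

Lemma MVT_le (f g : R -> R) a b K : a <= b ->
  (forall x, a <= x <= b -> continuity_pt f x) ->
  (forall x, a < x < b -> derivable_pt_lim f x (g x)) ->
  (forall x, a < x < b -> g x <= K) ->
  f b - f a <= K * (b - a).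
Proof.
  intros Hab Hc Hd HK. destruct (Req_dec a b) as [->|Hne]; [lra|].
  destruct (MVT_lim f g a b) as [c [Pc ->]]; auto; [lra|].
  apply Rmult_le_compat_r; [lra | now apply HK].
Qed.

Lemma grid_floor p t : 0 < p -> 0 <= t -> exists n, INR n * p <= t < INR (S n) * p.
Proof.
  intros Hp Ht. destruct (archimed (t / p)) as [H1 H2].
  assert (Hz : (0 < up (t / p))%Z).
  { apply lt_IZR. assert (0 <= t / p) by (unfold Rdiv; apply Rmult_le_pos; [lra | left; apply Rinv_0_lt_compat; lra]). lra. }
  exists (Z.to_nat (up (t / p) - 1)).
  rewrite S_INR, INR_IZR_INZ, Z2Nat.id, minus_IZR by lia. simpl.
  assert (E : t = t / p * p) by (field; lra).
  split; [rewrite E at 2; apply Rmult_le_compat_r | rewrite E at 1; apply Rmult_lt_compat_r]; lra.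
Qed.

Lemma grid_unbounded p K : 0 < p -> exists n, K <= INR n * p.
Proof.
  intros Hp. destruct (grid_floor p (Rmax 0 K) Hp (Rmax_l _ _)) as [n Hn].
  exists (S n). assert (K <= Rmax 0 K) by apply Rmax_r. lra.
Qed.

Lemma antitone_of_piecewise h (E : R -> R) : 0 < h ->
  (forall k a b, INR k * h <= a -> a <= b -> b <= INR (S k) * h -> E b <= E a) ->
  forall s t, 0 <= s -> s <= t -> E t <= E s.
Proof.
  intros Hh Hpiece.
  assert (Hn : forall n s t, 0 <= s -> s <= t -> t <= INR n * h -> E t <= E s).
  { induction n as [|n IH]; intros s t Hs Hst Ht.
    - simpl in Ht. replace t with s by lra. lra.
    - destruct (Rle_dec t (INR n * h)); [now apply IH|].
      destruct (Rle_dec (INR n * h) s); [apply (Hpiece n); lra|].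
      apply Rle_trans with (E (INR n * h)); [apply (Hpiece n) | apply IH]; lra. }
  intros s t Hs Hst. destruct (grid_floor h t Hh) as [n Hnt]; [lra|].
  apply (Hn (S n)); lra.
Qed.

Lemma periodic_iter (f : R -> R) p : 0 <= p -> (forall t, 0 <= t -> f (t + p) = f t) ->
  forall n s, 0 <= s -> f (s + INR n * p) = f s.
Proof.
  intros Hp Hper n s Hs. induction n as [|n IH].
  - simpl. f_equal; ring.
  - rewrite S_INR. replace (s + (INR n + 1) * p) with (s + INR n * p + p) by ring.
    rewrite Hper; [exact IH|].
    assert (0 <= INR n * p) by (apply Rmult_le_pos; [apply pos_INR | lra]). lra.
Qed.

Lemma periodic_bounded (f : R -> R) p : 0 < p -> (forall t, continuity_pt f t) ->
  (forall t, 0 <= t -> f (t + p) = f t) ->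
  exists M, forall t, 0 <= t -> Rabs (f t) <= M.
Proof.
  intros Hp Hc Hper.
  destruct (continuity_ab_maj (fun t => Rabs (f t)) 0 p) as [x [Hx _]]; [lra| |].
  { intros c _. apply (continuity_pt_comp f Rabs); [apply Hc | apply Rcontinuity_abs]. }
  exists (Rabs (f x)). intros t Ht. destruct (grid_floor p t Hp Ht) as [n Hn].
  rewrite S_INR, Rmult_plus_distr_r, Rmult_1_l in Hn.
  replace t with ((t - INR n * p) + INR n * p) by ring.
  rewrite (periodic_iter f p ltac:(lra) Hper) by lra. apply Hx. lra.
Qed.

Definition vanishes_at_infinity (f : R -> R) : Prop :=
  forall eps, 0 < eps -> exists K, forall t, K <= t -> Rabs (f t) < eps.

Lemma periodic_vanishing_eq0 (f : R -> R) p : 0 < p ->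
  (forall t, 0 <= t -> f (t + p) = f t) -> vanishes_at_infinity f ->
  forall t, 0 <= t -> f t = 0.
Proof.
  intros Hp Hper Hvan t Ht. apply NNPP. intros Hne.
  assert (Hpos : 0 < Rabs (f t)) by now apply Rabs_pos_lt.
  destruct (Hvan _ Hpos) as [K HK]. destruct (grid_unbounded p (K - t) Hp) as [n Hn].
  specialize (HK (t + INR n * p)). rewrite (periodic_iter f p ltac:(lra) Hper) in HK by lra.
  assert (Rabs (f t) < Rabs (f t)) by (apply HK; lra). lra.
Qed.

Lemma is_integral_unique f a b l1 l2 :
  is_integral f a b l1 -> is_integral f a b l2 -> l1 = l2.
Proof. intros [p1 <-] [p2 <-]. apply RiemannInt_P5. Qed.

Lemma is_integral_Chasles f a b c l1 l2 :
  is_integral f a b l1 -> is_integral f b c l2 -> is_integral f a c (l1 + l2).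
Proof.
  intros [p1 <-] [p2 <-]. exists (RiemannInt_P24 p1 p2). symmetry. apply RiemannInt_P26.
Qed.

Lemma is_integral_ext f g a b l : a <= b -> (forall x, a <= x <= b -> f x = g x) ->
  is_integral f a b l -> is_integral g a b l.
Proof.
  intros Hab Hfg [p <-].
  assert (pg : Riemann_integrable g a b).
  { refine (Riemann_integrable_ext g _ p). intros x Hx. apply Hfg.
    now rewrite Rmin_left, Rmax_right in Hx. }
  exists pg. apply RiemannInt_P18; [exact Hab|]. intros x Hx. symmetry; apply Hfg; lra.
Qed.

Lemma is_integral_plus f g a b l1 l2 : a <= b ->
  is_integral f a b l1 -> is_integral g a b l2 -> is_integral (fun t => f t + g t) a b (l1 + l2).
Proof.
  intros Hab [p1 <-] [p2 <-].
  apply (is_integral_ext (fun t => f t + 1 * g t)); [exact Hab | intros; ring|].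
  exists (RiemannInt_P10 1 p1 p2). rewrite (RiemannInt_P13 p1 p2). ring.
Qed.

Lemma is_integral_of_continuity f a b : a <= b ->
  (forall x, a <= x <= b -> continuity_pt f x) -> exists l, is_integral f a b l.
Proof. intros Hab Hc. exists (RiemannInt (continuity_implies_RiemannInt Hab Hc)). now eexists. Qed.

Lemma is_integral_abs_le f a b l M : a <= b ->
  (forall x, a < x < b -> Rabs (f x) <= M) -> is_integral f a b l -> Rabs l <= M * (b - a).
Proof.
  intros Hab HM [p <-].
  destruct (RiemannInt_const_bound (l := - M) (u := M) p Hab) as [H1 H2].
  - intros x Hx. specialize (HM x Hx). unfold Rabs in HM; destruct Rcase_abs; lra.
  - apply Rabs_le. lra.
Qed.

Lemma is_integral_FTC (f F : R -> R) a b : a <= b ->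
  (forall x, a <= x <= b -> continuity_pt f x) ->
  (forall x, a <= x <= b -> continuity_pt F x) ->
  (forall x, a < x < b -> derivable_pt_lim F x (f x)) ->
  is_integral f a b (F b - F a).
Proof.
  intros Hab Hfc HFc HFd.
  exists (continuity_implies_RiemannInt Hab Hfc).
  rewrite (RiemannInt_P20 Hab (FTC_P1 Hab Hfc)).
  set (P := primitive Hab (FTC_P1 Hab Hfc)).
  destruct (Req_dec a b) as [<-|Hne]; [ring|].
  (* [P - F] has derivative [0] on [(a, b)], so it is constant *)
  destruct (MVT_lim (fun x => P x - F x) (fun _ => 0) a b) as [c [_ Hc]]; [lra| | |lra].
  - intros x Hx. apply continuity_pt_minus; [|now apply HFc].
    apply derivable_continuous_pt. exists (f x). now apply RiemannInt_P28.
  - intros x Hx. replace 0 with (f x - f x) by ring.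
    apply derivable_pt_lim_minus; [apply RiemannInt_P28; lra | now apply HFd].
Qed.

Lemma is_integral_shift f a b p l : a <= b -> (forall t, continuity_pt f t) ->
  is_integral f (a + p) (b + p) l -> is_integral (fun t => f (t + p)) a b l.
Proof.
  intros Hab Hf [pr <-].
  assert (Hab' : a + p <= b + p) by lra.
  assert (Hfc : forall x, a + p <= x <= b + p -> continuity_pt f x) by (intros; apply Hf).
  rewrite (RiemannInt_P20 Hab' (FTC_P1 Hab' Hfc)).
  set (P := primitive Hab' (FTC_P1 Hab' Hfc)).
  apply (is_integral_FTC _ (fun t => P (t + p))); [exact Hab | intros; now apply continuity_pt_shift| |].
  - intros x Hx. apply continuity_pt_shift, derivable_continuous_pt.
    exists (f (x + p)). apply RiemannInt_P28. lra.
  - intros x Hx. apply derivable_pt_lim_shift, RiemannInt_P28. lra.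
Qed.

Lemma has_average_of_bound f a : (forall t, continuity_pt f t) ->
  (forall eta, 0 < eta -> exists K, forall tau l, 0 < tau -> is_integral f 0 tau l ->
      Rabs (l - a * tau) <= K + eta * tau) ->
  has_average f a.
Proof.
  intros Hc Hbound. split.
  { intros tau Ht. apply is_integral_of_continuity; [lra | intros; apply Hc]. }
  intros eps He. destruct (Hbound (eps / 2)) as [K HK]; [lra|].
  exists (Rmax 0 (2 * K / eps)). intros tau l Hm Ht Hl.
  assert (HKtau : K < eps / 2 * tau).
  { assert (Hlt : 2 * K / eps < tau) by (eapply Rle_lt_trans; [apply Rmax_r | exact Hm]).
    apply Rmult_lt_compat_r with (r := eps / 2) in Hlt; [|lra].
    replace (2 * K / eps * (eps / 2)) with K in Hlt by (field; lra). lra. }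
  replace (l / tau - a) with ((l - a * tau) * / tau) by (field; lra).
  rewrite Rabs_mult, (Rabs_right (/ tau)) by (apply Rle_ge, Rlt_le, Rinv_0_lt_compat; lra).
  apply Rmult_lt_reg_r with tau; [lra|].
  rewrite Rmult_assoc, Rinv_l, Rmult_1_r by lra.
  specialize (HK tau l Ht Hl). lra.
Qed.

Lemma has_average_ext f g a :
  (forall t, 0 <= t -> f t = g t) -> has_average f a -> has_average g a.
Proof.
  intros Hfg [Hint Hlim]. split.
  - intros tau Ht. destruct (Hint tau Ht) as [l Hl]. exists l.
    apply (is_integral_ext f); [lra | intros; apply Hfg; lra | exact Hl].
  - intros eps He. destruct (Hlim eps He) as [M HM]. exists M. intros tau l Hm Ht Hl.
    apply HM; [exact Hm | exact Ht|].
    apply (is_integral_ext g); [lra | intros; symmetry; apply Hfg; lra | exact Hl].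
Qed.

Lemma has_average_plus f g a b :
  has_average f a -> has_average g b -> has_average (fun t => f t + g t) (a + b).
Proof.
  intros [Hfi Hf] [Hgi Hg].
  assert (Hsum : forall tau, 0 < tau -> exists l1 l2, is_integral f 0 tau l1 /\
    is_integral g 0 tau l2 /\ is_integral (fun t => f t + g t) 0 tau (l1 + l2)).
  { intros tau Ht. destruct (Hfi tau Ht) as [l1 H1]. destruct (Hgi tau Ht) as [l2 H2].
    exists l1, l2. repeat split; auto. apply is_integral_plus; auto; lra. }
  split.
  - intros tau Ht. destruct (Hsum tau Ht) as [l1 [l2 [_ [_ H]]]]. now exists (l1 + l2).
  - intros eps He.
    destruct (Hf (eps / 2)) as [M1 HM1]; [lra|]. destruct (Hg (eps / 2)) as [M2 HM2]; [lra|].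
    exists (Rmax M1 M2). intros tau l Hm Ht Hl.
    destruct (Hsum tau Ht) as [l1 [l2 [H1 [H2 H12]]]].
    rewrite (is_integral_unique _ _ _ _ _ Hl H12).
    specialize (HM1 tau l1 ltac:(eapply Rle_lt_trans; [apply Rmax_l | exact Hm]) Ht H1).
    specialize (HM2 tau l2 ltac:(eapply Rle_lt_trans; [apply Rmax_r | exact Hm]) Ht H2).
    replace ((l1 + l2) / tau - (a + b)) with ((l1 / tau - a) + (l2 / tau - b)) by (field; lra).
    eapply Rle_lt_trans; [apply Rabs_triang | lra].
Qed.

Lemma has_average_vanishing f : (forall t, continuity_pt f t) ->
  vanishes_at_infinity f -> has_average f 0.
Proof.
  intros Hc Hvan. apply has_average_of_bound; [exact Hc|]. intros eta He.
  destruct (Hvan eta He) as [K0 HK0]. set (K := Rmax 0 K0).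
  assert (HK : 0 <= K) by apply Rmax_l.
  destruct (continuity_ab_maj (fun t => Rabs (f t)) 0 K HK) as [x [Hx _]].
  { intros c _. apply (continuity_pt_comp f Rabs); [apply Hc | apply Rcontinuity_abs]. }
  set (M := Rabs (f x)). assert (HM : 0 <= M) by apply Rabs_pos.
  exists (M * K). intros tau l Ht Hl. rewrite Rmult_0_l, Rminus_0_r.
  assert (Heta : 0 <= eta * tau) by (apply Rmult_le_pos; lra).
  destruct (Rle_dec tau K) as [Hle|Hgt].
  - assert (Rabs l <= M * (tau - 0)) by (apply (is_integral_abs_le f); [lra | intros y Hy; apply Hx; lra | exact Hl]).
    assert (M * tau <= M * K) by (apply Rmult_le_compat_l; lra). lra.
  - destruct (is_integral_of_continuity f 0 K HK) as [l1 H1]; [intros; apply Hc|].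
    destruct (is_integral_of_continuity f K tau) as [l2 H2]; [lra | intros; apply Hc|].
    rewrite (is_integral_unique _ _ _ _ _ Hl (is_integral_Chasles _ _ _ _ _ _ H1 H2)).
    assert (Rabs l1 <= M * (K - 0)) by (apply (is_integral_abs_le f); [lra | intros y Hy; apply Hx; lra | exact H1]).
    assert (Rabs l2 <= eta * (tau - K)).
    { apply (is_integral_abs_le f); [lra | | exact H2]. intros y Hy.
      assert (K0 <= K) by apply Rmax_r. apply Rlt_le, HK0. lra. }
    eapply Rle_trans; [apply Rabs_triang|]. nra.
Qed.

Lemma is_integral_periodic_multiple f p A : 0 < p -> (forall t, continuity_pt f t) ->
  (forall t, 0 <= t -> f (t + p) = f t) -> is_integral f 0 p A ->
  forall n, is_integral f 0 (INR n * p) (INR n * A).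
Proof.
  intros Hp Hc Hper HA.
  assert (Hperiod : forall n, is_integral f (INR n * p) (INR n * p + p) A).
  { intros n. assert (Hn : 0 <= INR n * p) by (apply Rmult_le_pos; [apply pos_INR | lra]).
    destruct (is_integral_of_continuity f (INR n * p) (INR n * p + p)) as [l Hl]; [lra | intros; apply Hc|].
    replace A with l; [exact Hl|].
    apply (is_integral_unique f 0 p); [|exact HA].
    apply (is_integral_ext (fun t => f (t + INR n * p))); [lra | |].
    - intros t Ht. apply (periodic_iter f p); [lra | exact Hper | lra].
    - apply is_integral_shift; [lra | exact Hc|]. now rewrite Rplus_0_l, Rplus_comm. }
  induction n as [|n IH].
  - simpl. rewrite !Rmult_0_l. exists (RiemannInt_P7 f 0). apply RiemannInt_P9.
  - rewrite S_INR. replace ((INR n + 1) * p) with (INR n * p + p) by ring.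
    replace ((INR n + 1) * A) with (INR n * A + A) by ring.
    now apply (is_integral_Chasles _ _ (INR n * p)).
Qed.

Lemma has_average_periodic f p A : 0 < p -> (forall t, continuity_pt f t) ->
  (forall t, 0 <= t -> f (t + p) = f t) -> is_integral f 0 p A -> has_average f (A / p).
Proof.
  intros Hp Hc Hper HA.
  assert (Hgrid := is_integral_periodic_multiple f p A Hp Hc Hper HA).
  destruct (periodic_bounded f p Hp Hc Hper) as [M HM].
  apply has_average_of_bound; [exact Hc|]. intros eta He. exists (Rabs A + M * p).
  intros tau l Ht Hl. destruct (grid_floor p tau Hp) as [n Hn]; [lra|].
  rewrite S_INR in Hn.
  destruct (is_integral_of_continuity f (INR n * p) tau) as [r Hr]; [lra | intros; apply Hc|].
  rewrite (is_integral_unique _ _ _ _ _ Hl (is_integral_Chasles _ _ _ _ _ _ (Hgrid n) Hr)).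
  assert (Hrb : Rabs r <= M * (tau - INR n * p)).
  { apply (is_integral_abs_le f); [lra | | exact Hr]. intros y Hy.
    apply HM. assert (0 <= INR n * p) by (apply Rmult_le_pos; [apply pos_INR | lra]). lra. }
  assert (Hfrac : Rabs (INR n * A - A / p * tau) <= Rabs A).
  { replace (INR n * A - A / p * tau) with (A * (INR n - tau / p)) by (field; lra).
    rewrite Rabs_mult. rewrite <- (Rmult_1_r (Rabs A)) at 2.
    apply Rmult_le_compat_l; [apply Rabs_pos|]. apply Rabs_le.
    split; apply (Rmult_le_reg_r p); try lra; unfold Rdiv; field_simplify; lra. }
  assert (0 <= eta * tau) by (apply Rmult_le_pos; lra).
  assert (M * (tau - INR n * p) <= M * p).
  { apply Rmult_le_compat_l; [|lra]. eapply Rle_trans; [apply Rabs_pos | apply (HM 0); lra]. }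
  replace (INR n * A + r - A / p * tau) with ((INR n * A - A / p * tau) + r) by ring.
  eapply Rle_trans; [apply Rabs_triang | lra].
Qed.

Definition phase_sign (k : nat) : R := if Nat.even k then 1 else -1.

Lemma phase_sign_S k : phase_sign (S k) = - phase_sign k.
Proof.
  unfold phase_sign. rewrite Nat.even_succ, <- Nat.negb_even.
  destruct (Nat.even k); simpl; ring.
Qed.

Lemma Rabs_phase_sign k : Rabs (phase_sign k) = 1.
Proof. unfold phase_sign; destruct (Nat.even k); unfold Rabs; destruct Rcase_abs; lra. Qed.

(* The system written on half-periods of length [h]: the [k]-th half-period uses
   [A1, b1] for even [k] and [A2, 0] for odd [k], and [A2] is [A1] with the sign of
   the coupling between [i] and [v] reversed. *)
Definition switched_sol (Rr L C Vdc h : R) (i v : R -> R) : Prop :=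
  (forall t, continuity_pt i t) /\ (forall t, continuity_pt v t) /\
  forall k t, INR k * h < t < INR (S k) * h ->
    derivable_pt_lim i t ((- Rr * i t - phase_sign k * v t + (1 + phase_sign k) / 2 * Vdc) / L) /\
    derivable_pt_lim v t (phase_sign k * i t / C).

(* [continuity_pt] is two-sided; extending by the value at [0] makes the one-sided
   continuity of [cont_nonneg] usable. *)
Definition clamp (f : R -> R) (t : R) : R := f (Rmax 0 t).

Lemma clamp_id f t : 0 <= t -> clamp f t = f t.
Proof. intros Ht. unfold clamp. now rewrite Rmax_right. Qed.

Lemma continuity_pt_clamp f : cont_nonneg f -> forall t, continuity_pt (clamp f) t.
Proof.
  intros Hf t eps Heps.
  destruct (Hf _ (Rmax_l 0 t) eps Heps) as [alp [Halp Hx]].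
  exists alp; split; [exact Halp|]. intros x [_ Hd].
  apply (Hx (Rmax 0 x)). split; [apply Rmax_l|].
  simpl in *. unfold Rdist in *. eapply Rle_lt_trans; [|exact Hd].
  unfold Rmax. destruct (Rle_dec 0 x), (Rle_dec 0 t); unfold Rabs; repeat destruct Rcase_abs; lra.
Qed.

Lemma derivable_pt_lim_clamp f t l :
  0 < t -> derivable_pt_lim f t l -> derivable_pt_lim (clamp f) t l.
Proof.
  intros Ht Hf eps Heps. destruct (Hf eps Heps) as [del Hdel].
  assert (Hm : 0 < Rmin del t) by (apply Rmin_pos; [apply cond_pos | exact Ht]).
  exists (mkposreal _ Hm). intros k Hk Hkl. simpl in Hkl.
  assert (Hkt : Rabs k < t) by (eapply Rlt_le_trans; [exact Hkl | apply Rmin_r]).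
  apply Rabs_def2 in Hkt as [Hk1 Hk2].
  rewrite !clamp_id by lra. apply Hdel; [exact Hk|].
  eapply Rlt_le_trans; [exact Hkl | apply Rmin_l].
Qed.

Lemma switched_sol_clamp Rr L C Vdc T i v : 0 < L -> 0 < T ->
  is_solution Rr L C Vdc T i v -> switched_sol Rr L C Vdc (T / 2) (clamp i) (clamp v).
Proof.
  intros HL HT [Hci [Hcv [Hon Hoff]]].
  split; [now apply continuity_pt_clamp|]. split; [now apply continuity_pt_clamp|].
  intros k t Ht.
  assert (Ht0 : 0 < t).
  { assert (0 <= INR k * (T / 2)) by (apply Rmult_le_pos; [apply pos_INR | lra]). lra. }
  rewrite !(clamp_id _ t) by lra.
  destruct (Nat.Even_or_Odd k) as [[m ->]|[m ->]].
  - replace (INR (2 * m) * (T / 2)) with (INR m * T) in Ht by (rewrite mult_INR; simpl; field).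
    replace (INR (S (2 * m)) * (T / 2)) with (INR m * T + T / 2) in Ht
      by (rewrite S_INR, mult_INR; simpl; field).
    destruct (Hon m t Ht) as [Hi Hv]. unfold phase_sign. rewrite Nat.even_even.
    split; apply derivable_pt_lim_clamp; auto; eapply derivable_pt_lim_val; try eassumption.
    + field. lra.
    + unfold Rdiv. ring.
  - replace (INR (2 * m + 1) * (T / 2)) with (INR m * T + T / 2) in Ht
      by (rewrite plus_INR, mult_INR; simpl; field).
    replace (INR (S (2 * m + 1)) * (T / 2)) with (INR m * T + T) in Ht
      by (rewrite S_INR, plus_INR, mult_INR; simpl; field).
    destruct (Hoff m t Ht) as [Hi Hv]. unfold phase_sign. rewrite Nat.even_odd.
    split; apply derivable_pt_lim_clamp; auto; eapply derivable_pt_lim_val; try eassumption.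
    + field. lra.
    + unfold Rdiv. ring.
Qed.

Lemma switched_sol_sub Rr L C Vdc h i1 v1 i2 v2 : 0 < L ->
  switched_sol Rr L C Vdc h i1 v1 -> switched_sol Rr L C Vdc h i2 v2 ->
  switched_sol Rr L C 0 h (fun t => i1 t - i2 t) (fun t => v1 t - v2 t).
Proof.
  intros HL [ci1 [cv1 H1]] [ci2 [cv2 H2]].
  split; [intros; now apply continuity_pt_minus|].
  split; [intros; now apply continuity_pt_minus|].
  intros k t Ht. destruct (H1 k t Ht) as [di1 dv1]. destruct (H2 k t Ht) as [di2 dv2].
  split; (eapply derivable_pt_lim_val; [|apply derivable_pt_lim_minus; eassumption]).
  - field. lra.
  - unfold Rdiv. ring.
Qed.

(* Half a period later the roles of the two subsystems are swapped, and
   [v -> Vdc - v] turns one into the other. *)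
Lemma switched_sol_half_shift Rr L C Vdc h i v : 0 < L ->
  switched_sol Rr L C Vdc h i v ->
  switched_sol Rr L C Vdc h (fun t => i (t + h)) (fun t => Vdc - v (t + h)).
Proof.
  intros HL [ci [cv H]]. split; [intros; apply continuity_pt_shift, ci|].
  split; [intros; apply continuity_pt_minus;
          [now apply continuity_pt_const | apply continuity_pt_shift, cv]|].
  intros k t Ht.
  assert (Ht' : INR (S k) * h < t + h < INR (S (S k)) * h) by (rewrite !S_INR in *; lra).
  destruct (H (S k) (t + h) Ht') as [di dv]. rewrite phase_sign_S in di, dv. split.
  - apply derivable_pt_lim_shift. eapply derivable_pt_lim_val; [|exact di]. field. lra.
  - assert (dv' := derivable_pt_lim_minus _ _ _ _ _ (derivable_pt_lim_const Vdc (t + h)) dv).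
    apply derivable_pt_lim_shift in dv'. unfold minus_fct in dv'.
    eapply derivable_pt_lim_val; [|exact dv']. unfold Rdiv. ring.
Qed.

Lemma Rabs_mult_self x : Rabs x * Rabs x = x * x.
Proof. unfold Rabs; destruct Rcase_abs; ring. Qed.

Lemma Rabs_le_of_sq_le x c : x * x <= c -> Rabs x <= 1 + c.
Proof. intros H. unfold Rabs; destruct Rcase_abs; nra. Qed.

Lemma Rabs_lt_of_sq_lt x e : 0 < e -> x * x < e * e -> Rabs x < e.
Proof. intros He H. unfold Rabs; destruct Rcase_abs; nra. Qed.

Section Homogeneous.
Variables (Rr L C h : R) (ei ev : R -> R).
Hypotheses (HR : 0 < Rr) (HL : 0 < L) (HC : 0 < C) (Hh : 0 < h).
Hypothesis Hsol : switched_sol Rr L C 0 h ei ev.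

Lemma homogeneous_ode k t : INR k * h < t < INR (S k) * h ->
  derivable_pt_lim ei t ((- Rr * ei t - phase_sign k * ev t) / L) /\
  derivable_pt_lim ev t (phase_sign k * ei t / C).
Proof.
  intros Ht. destruct Hsol as [_ [_ H]]. destruct (H k t Ht) as [di dv]. split; [|exact dv].
  eapply derivable_pt_lim_val; [|exact di]. field. lra.
Qed.

Definition energy t := L / 2 * (ei t * ei t) + C / 2 * (ev t * ev t).

Lemma energy_nonneg t : 0 <= energy t.
Proof. unfold energy. nra. Qed.

Lemma continuity_pt_energy t : continuity_pt energy t.
Proof.
  destruct Hsol as [ci [cv _]]. unfold energy.
  apply continuity_pt_plus; apply continuity_pt_scal; now apply continuity_pt_mult.
Qed.

Lemma derivable_pt_lim_energy k t : INR k * h < t < INR (S k) * h ->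
  derivable_pt_lim energy t (- Rr * (ei t * ei t)).
Proof.
  intros Ht. destruct (homogeneous_ode k t Ht) as [di dv].
  assert (H := derivable_pt_lim_plus _ _ t _ _
     (derivable_pt_lim_scal _ (L / 2) t _ (derivable_pt_lim_mult _ _ t _ _ di di))
     (derivable_pt_lim_scal _ (C / 2) t _ (derivable_pt_lim_mult _ _ t _ _ dv dv))).
  unfold plus_fct, mult_real_fct, mult_fct in H. eapply derivable_pt_lim_val; [|exact H].
  field. split; lra.
Qed.

Lemma energy_antitone s t : 0 <= s -> s <= t -> energy t <= energy s.
Proof.
  apply (antitone_of_piecewise h); [exact Hh|]. intros k a b Ha Hab Hb.
  assert (energy b - energy a <= 0 * (b - a)); [|lra].
  apply (MVT_le energy (fun t => - Rr * (ei t * ei t))); [exact Hab | intros; apply continuity_pt_energy | |].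
  - intros x Hx. apply (derivable_pt_lim_energy k). lra.
  - intros x _. nra.
Qed.

Lemma state_bounded t : 0 <= t ->
  Rabs (ei t) <= 1 + 2 * energy 0 / L /\ Rabs (ev t) <= 1 + 2 * energy 0 / C.
Proof.
  intros Ht. assert (HE := energy_antitone 0 t (Rle_refl 0) Ht). unfold energy in HE.
  split; apply Rabs_le_of_sq_le; unfold energy;
    [apply (Rmult_le_reg_l (L / 2)) | apply (Rmult_le_reg_l (C / 2))]; try lra;
    field_simplify; try lra; nra.
Qed.

Lemma current_lipschitz : exists B, 0 <= B /\ forall k x y,
  INR k * h <= x <= INR (S k) * h -> INR k * h <= y <= INR (S k) * h ->
  Rabs (ei x - ei y) <= B * Rabs (x - y).
Proof.
  set (Bi := 1 + 2 * energy 0 / L). set (Bv := 1 + 2 * energy 0 / C).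
  assert (HBi : 0 <= Bi) by (unfold Bi; assert (0 <= energy 0 / L) by (apply Rle_mult_inv_pos; [apply energy_nonneg | lra]); lra).
  assert (HBv : 0 <= Bv) by (unfold Bv; assert (0 <= energy 0 / C) by (apply Rle_mult_inv_pos; [apply energy_nonneg | lra]); lra).
  exists ((Rr * Bi + Bv) / L). split; [apply Rle_mult_inv_pos; nra|].
  assert (Hlip : forall k a b, INR k * h <= a -> a <= b -> b <= INR (S k) * h ->
    Rabs (ei b - ei a) <= (Rr * Bi + Bv) / L * (b - a)).
  { intros k a b Ha Hab Hb. destruct Hsol as [ci _].
    apply (MVT_abs_le ei (fun t => (- Rr * ei t - phase_sign k * ev t) / L));
      [exact Hab | intros; apply ci | intros x Hx; apply (homogeneous_ode k); lra|].
    intros x Hx.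
    assert (Hx0 : 0 <= x) by (assert (0 <= INR k * h) by (apply Rmult_le_pos; [apply pos_INR | lra]); lra).
    destruct (state_bounded x Hx0) as [Hi Hv]. fold Bi in Hi. fold Bv in Hv.
    unfold Rdiv. rewrite Rabs_mult, (Rabs_right (/ L)) by (apply Rle_ge, Rlt_le, Rinv_0_lt_compat; lra).
    apply Rmult_le_compat_r; [apply Rlt_le, Rinv_0_lt_compat; lra|].
    unfold Rminus. eapply Rle_trans; [apply Rabs_triang|].
    rewrite Rabs_Ropp, !Rabs_mult, Rabs_Ropp, Rabs_phase_sign, (Rabs_right Rr) by lra.
    assert (Rr * Rabs (ei x) <= Rr * Bi) by (apply Rmult_le_compat_l; lra). lra. }
  intros k x y Hx Hy. destruct (Rle_dec y x).
  - rewrite (Rabs_right (x - y)) by lra. apply (Hlip k); lra.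
  - rewrite Rabs_minus_sym, (Rabs_minus_sym x), (Rabs_right (y - x)) by lra. apply (Hlip k); lra.
Qed.

(* A current of size [eps] at time [t] persists, by the Lipschitz bound, on a
   subinterval of fixed length of a half-period, which dissipates a fixed amount of energy. *)
Lemma energy_drop eps : 0 < eps -> exists c, 0 < c /\
  forall t, h <= t -> eps <= Rabs (ei t) -> energy (t + h) <= energy (t - h) - c.
Proof.
  intros He. destruct current_lipschitz as [B [HB Hlip]].
  set (d := Rmin (eps / (2 * (B + 1))) (h / 2)).
  assert (Hd1 : d <= eps / (2 * (B + 1))) by apply Rmin_l.
  assert (Hd2 : d <= h / 2) by apply Rmin_r.
  assert (Hd0 : 0 < d) by (apply Rmin_pos; [apply Rdiv_lt_0_compat | ]; lra).
  assert (HBd : B * d <= eps / 2).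
  { apply Rle_trans with (B * (eps / (2 * (B + 1)))); [apply Rmult_le_compat_l; lra|].
    apply (Rmult_le_reg_r (2 * (B + 1))); [lra|]. field_simplify; nra. }
  exists (Rr * (eps / 2) * (eps / 2) * d). split; [repeat apply Rmult_lt_0_compat; lra|].
  intros t Ht Hei. destruct (grid_floor h t Hh) as [k Hk]; [lra|].
  assert (Ha : exists a, INR k * h <= a /\ a + d <= INR (S k) * h /\ a <= t <= a + d).
  { destruct (Rle_dec (t + d) (INR (S k) * h)); [exists t; lra|].
    exists (t - d). rewrite S_INR in *. lra. }
  destruct Ha as [a [Ha1 [Ha2 Ha3]]].
  assert (Hdrop : energy (a + d) - energy a <= - (Rr * (eps / 2) * (eps / 2)) * (a + d - a)).
  { apply (MVT_le energy (fun t => - Rr * (ei t * ei t)));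
      [lra | intros; apply continuity_pt_energy | intros x Hx; apply (derivable_pt_lim_energy k); lra|].
    intros x Hx.
    assert (Hxt := Hlip k x t ltac:(lra) ltac:(lra)).
    assert (Rabs (x - t) <= d) by (apply Rabs_le; lra).
    assert (B * Rabs (x - t) <= B * d) by (apply Rmult_le_compat_l; lra).
    assert (Rabs (ei t) <= Rabs (ei x) + Rabs (ei x - ei t)).
    { replace (ei t) with (ei x - (ei x - ei t)) at 1 by ring.
      eapply Rle_trans; [apply Rabs_triang|]. rewrite Rabs_Ropp. lra. }
    assert (Hx2 : eps / 2 * (eps / 2) <= ei x * ei x).
    { rewrite <- (Rabs_mult_self (ei x)). apply Rmult_le_compat; lra. }
    nra. }
  assert (energy (t + h) <= energy (a + d)) by (apply energy_antitone; lra).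
  assert (energy a <= energy (t - h)) by (apply energy_antitone; lra).
  lra.
Qed.

Lemma current_vanishes : vanishes_at_infinity ei.
Proof.
  intros eps He. apply NNPP. intros Hn.
  assert (Hlarge : forall K, exists t, K <= t /\ eps <= Rabs (ei t)).
  { intros K. apply NNPP. intros Hno. apply Hn. exists K. intros t Ht.
    apply Rnot_le_lt. intros Hge. apply Hno. now exists t. }
  destruct (energy_drop eps He) as [c [Hc Hdrop]].
  assert (Hdec : forall j : nat, exists s, 0 <= s /\ energy s <= energy 0 - INR j * c).
  { induction j as [|j [s [Hs Hes]]]; [exists 0; simpl; lra|].
    destruct (Hlarge (s + h)) as [t [Ht Hei]].
    exists (t + h). split; [lra|].
    assert (energy (t - h) <= energy s) by (apply energy_antitone; lra).
    specialize (Hdrop t ltac:(lra) Hei). rewrite S_INR. lra. }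
  destruct (grid_floor c (energy 0) Hc (energy_nonneg 0)) as [n Hn'].
  destruct (Hdec (S n)) as [s [_ Hs]]. assert (0 <= energy s) by apply energy_nonneg. lra.
Qed.

(* On a half-period where the current is small, the mean value theorem applied to
   [L i' = - Rr i -/+ v] makes the voltage small at some point too. *)
Lemma exists_small_state eta K : 0 < eta ->
  exists c, K <= c /\ Rabs (ei c) < eta /\ Rabs (ev c) < eta.
Proof.
  intros He. set (D := Rr + 2 * L / h + 1).
  assert (HD : 0 < 2 * L / h) by (apply Rdiv_lt_0_compat; lra).
  assert (He' : 0 < eta / D) by (apply Rdiv_lt_0_compat; unfold D; lra).
  destruct (current_vanishes _ He') as [K0 HK0].
  destruct (grid_unbounded h (Rmax 0 (Rmax K K0)) Hh) as [k Hk].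
  assert (HKk : Rmax K K0 <= Rmax 0 (Rmax K K0)) by apply Rmax_r.
  assert (HK : K <= Rmax K K0) by apply Rmax_l. assert (HKK0 : K0 <= Rmax K K0) by apply Rmax_r.
  set (a := INR k * h) in *.
  assert (HSk : INR (S k) * h = a + h) by (unfold a; rewrite S_INR; ring).
  destruct Hsol as [ci _].
  destruct (MVT_lim ei (fun t => (- Rr * ei t - phase_sign k * ev t) / L) a (a + h))
    as [c [Hc Hmvt]]; [lra | intros; apply ci | |].
  { intros x Hx. apply (homogeneous_ode k). rewrite HSk. fold a. lra. }
  assert (Hi1 : Rabs (ei c) < eta / D) by (apply HK0; lra).
  assert (Hev : phase_sign k * ev c = - Rr * ei c - L / h * (ei (a + h) - ei a))
    by (rewrite Hmvt; field; lra).
  assert (Hv : Rabs (ev c) <= Rr * (eta / D) + 2 * L / h * (eta / D)).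
  { rewrite <- (Rmult_1_l (Rabs (ev c))), <- (Rabs_phase_sign k), <- Rabs_mult, Hev.
    assert (Rabs (ei (a + h)) < eta / D) by (apply HK0; lra).
    assert (Rabs (ei a) < eta / D) by (apply HK0; lra).
    assert (Rabs (ei (a + h) - ei a) <= 2 * (eta / D)).
    { unfold Rminus. eapply Rle_trans; [apply Rabs_triang|]. rewrite Rabs_Ropp. lra. }
    assert (HLh : 0 < L / h) by (apply Rdiv_lt_0_compat; lra).
    unfold Rminus at 1. eapply Rle_trans; [apply Rabs_triang|].
    rewrite Rabs_Ropp, !Rabs_mult, Rabs_Ropp, (Rabs_right Rr), (Rabs_right (L / h)) by lra.
    replace (2 * L / h * (eta / D)) with (L / h * (2 * (eta / D))) by (unfold Rdiv; ring).
    nra. }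
  assert (HeD : eta / D * D = eta) by (field; unfold D; lra).
  exists c. unfold D in *. repeat split; nra.
Qed.

Lemma state_vanishes : vanishes_at_infinity ei /\ vanishes_at_infinity ev.
Proof.
  assert (Hsmall : forall eps, 0 < eps -> exists K, forall t, K <= t ->
    ei t * ei t < eps * eps /\ ev t * ev t < eps * eps).
  { intros eps He. set (m := Rmin L C / (L + C)).
    assert (Hmin : 0 < Rmin L C) by (apply Rmin_pos; lra).
    assert (HmL : Rmin L C <= L) by apply Rmin_l. assert (HmC : Rmin L C <= C) by apply Rmin_r.
    assert (Hm0 : 0 < m) by (apply Rdiv_lt_0_compat; lra).
    assert (Hm1 : m * (L + C) = Rmin L C) by (unfold m; field; lra).
    assert (Hm1' : m <= 1) by nra.
    destruct (exists_small_state (eps * m / 2) 0) as [c [Hc [Hi Hv]]]; [nra|].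
    exists c. intros t Ht.
    assert (HE := energy_antitone c t Hc Ht). unfold energy in HE.
    assert (ei c * ei c < (eps * m / 2) * (eps * m / 2))
      by (rewrite <- (Rabs_mult_self (ei c)); apply Rmult_le_0_lt_compat; auto using Rabs_pos).
    assert (ev c * ev c < (eps * m / 2) * (eps * m / 2))
      by (rewrite <- (Rabs_mult_self (ev c)); apply Rmult_le_0_lt_compat; auto using Rabs_pos).
    assert (Hsq : (L + C) * ((eps * m / 2) * (eps * m / 2)) < Rmin L C * (eps * eps)).
    { replace ((L + C) * ((eps * m / 2) * (eps * m / 2))) with (m * (L + C) * m * (eps * eps) / 4)
        by field.
      rewrite Hm1. assert (0 < Rmin L C * (eps * eps)) by (apply Rmult_lt_0_compat; nra). nra. }
    split; nra. }
  split; intros eps He; destruct (Hsmall eps He) as [K HK]; exists K; intros t Ht;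
    apply Rabs_lt_of_sq_lt; [exact He | apply HK; exact Ht | exact He | apply HK; exact Ht].
Qed.

End Homogeneous.

Lemma has_average_tracking f g a :
  (forall t, continuity_pt f t) -> (forall t, continuity_pt g t) ->
  vanishes_at_infinity (fun t => f t - g t) -> has_average g a -> has_average f a.
Proof.
  intros Hf Hg Hvan Hga.
  apply (has_average_ext (fun t => g t + (f t - g t))); [intros; ring|].
  rewrite <- (Rplus_0_r a). apply has_average_plus; [exact Hga|].
  apply has_average_vanishing; [intros; now apply continuity_pt_minus | exact Hvan].
Qed.

Section Periodic.
Variables (Rr L C Vdc T : R) (ip vp : R -> R).
Hypotheses (HR : 0 < Rr) (HL : 0 < L) (HC : 0 < C) (HT : 0 < T).
Hypothesis Hper : is_periodic_solution Rr L C Vdc T ip vp.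

Lemma periodic_switched_sol : switched_sol Rr L C Vdc (T / 2) (clamp ip) (clamp vp).
Proof. apply switched_sol_clamp; [exact HL | exact HT | apply Hper]. Qed.

Lemma clamp_periodic t : 0 <= t ->
  clamp ip (t + T) = clamp ip t /\ clamp vp (t + T) = clamp vp t.
Proof. intros Ht. rewrite !clamp_id by lra. now apply Hper. Qed.

(* The difference between the periodic solution and its image under
   [(i, v)(t) -> (i, Vdc - v)(t + T/2)] is periodic and dies out. *)
Lemma half_period_symmetry : ip (T / 2) = ip 0 /\ vp 0 + vp (T / 2) = Vdc.
Proof.
  set (h := T / 2). assert (Hh : 0 < h) by (unfold h; lra).
  set (ei := fun t => clamp ip t - clamp ip (t + h)).
  set (ev := fun t => clamp vp t - (Vdc - clamp vp (t + h))).
  assert (Hs : switched_sol Rr L C 0 h ei ev).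
  { apply (switched_sol_sub Rr L C Vdc); [exact HL | apply periodic_switched_sol|].
    now apply switched_sol_half_shift, periodic_switched_sol. }
  destruct (state_vanishes Rr L C h ei ev HR HL HC Hh Hs) as [Hvi Hvv].
  assert (Hei : ei 0 = 0).
  { apply (periodic_vanishing_eq0 ei T HT); [|exact Hvi | lra]. intros t Ht. unfold ei.
    replace (t + T + h) with (t + h + T) by ring.
    now rewrite (proj1 (clamp_periodic t Ht)), (proj1 (clamp_periodic (t + h) ltac:(lra))). }
  assert (Hev : ev 0 = 0).
  { apply (periodic_vanishing_eq0 ev T HT); [|exact Hvv | lra]. intros t Ht. unfold ev.
    replace (t + T + h) with (t + h + T) by ring.
    now rewrite (proj2 (clamp_periodic t Ht)), (proj2 (clamp_periodic (t + h) ltac:(lra))). }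
  unfold ei, ev in Hei, Hev. rewrite Rplus_0_l, !clamp_id in Hei, Hev by lra. split; lra.
Qed.

Lemma first_half_ode t : 0 < t < T / 2 ->
  derivable_pt_lim (clamp ip) t ((- Rr * clamp ip t - clamp vp t + Vdc) / L) /\
  derivable_pt_lim (clamp vp) t (clamp ip t / C).
Proof.
  intros Ht. destruct periodic_switched_sol as [_ [_ H]].
  destruct (H 0%nat t ltac:(simpl; lra)) as [di dv]. unfold phase_sign in di, dv. simpl in di, dv.
  split; eapply derivable_pt_lim_val; try eassumption; field; lra.
Qed.

Lemma second_half_ode t : T / 2 < t < T ->
  derivable_pt_lim (clamp ip) t ((- Rr * clamp ip t + clamp vp t) / L) /\
  derivable_pt_lim (clamp vp) t (- clamp ip t / C).
Proof.
  intros Ht. destruct periodic_switched_sol as [_ [_ H]].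
  destruct (H 1%nat t ltac:(simpl; lra)) as [di dv]. unfold phase_sign in di, dv. simpl in di, dv.
  split; eapply derivable_pt_lim_val; try eassumption; field; lra.
Qed.

Lemma current_average : has_average (clamp ip) (2 * C / T * (Vdc - 2 * vp 0)).
Proof.
  destruct periodic_switched_sol as [ci [cv _]].
  destruct half_period_symmetry as [_ Hmid].
  assert (HvT : vp T = vp 0) by (rewrite <- (Rplus_0_l T); apply Hper; lra).
  assert (H1 : is_integral (clamp ip) 0 (T / 2) (C * clamp vp (T / 2) - C * clamp vp 0)).
  { apply (is_integral_FTC _ (fun t => C * clamp vp t)); [lra | intros; apply ci | intros; now apply continuity_pt_scal|].
    intros x Hx. destruct (first_half_ode x Hx) as [_ dv].
    eapply derivable_pt_lim_val; [|exact (derivable_pt_lim_scal _ C x _ dv)]. field. lra. }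
  assert (H2 : is_integral (clamp ip) (T / 2) T (- C * clamp vp T - - C * clamp vp (T / 2))).
  { apply (is_integral_FTC _ (fun t => - C * clamp vp t)); [lra | intros; apply ci | intros; now apply continuity_pt_scal|].
    intros x Hx. destruct (second_half_ode x Hx) as [_ dv].
    eapply derivable_pt_lim_val; [|exact (derivable_pt_lim_scal _ (- C) x _ dv)]. field. lra. }
  replace (2 * C / T * (Vdc - 2 * vp 0))
    with ((C * clamp vp (T / 2) - C * clamp vp 0 + (- C * clamp vp T - - C * clamp vp (T / 2))) / T).
  - apply has_average_periodic; [exact HT | exact ci | intros; now apply clamp_periodic|].
    exact (is_integral_Chasles _ _ _ _ _ _ H1 H2).
  - rewrite !clamp_id, HvT by lra. replace (vp (T / 2)) with (Vdc - vp 0) by lra. field. lra.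
Qed.

Lemma voltage_average : has_average (clamp vp) (Vdc / 2).
Proof.
  destruct periodic_switched_sol as [ci [cv _]].
  destruct half_period_symmetry as [Hi Hmid].
  assert (HT0 : ip T = ip 0 /\ vp T = vp 0) by (rewrite <- (Rplus_0_l T); apply Hper; lra).
  pose (F1 := fun t => Vdc * t + - (Rr * C) * clamp vp t + - L * clamp ip t).
  pose (F2 := fun t => 0 * t + - (Rr * C) * clamp vp t + L * clamp ip t).
  assert (H1 : is_integral (clamp vp) 0 (T / 2) (F1 (T / 2) - F1 0)).
  { apply (is_integral_FTC _ F1); [lra | intros; apply cv | intros; now apply continuity_pt_lincomb|].
    intros x Hx. destruct (first_half_ode x Hx) as [di dv].
    eapply derivable_pt_lim_val; [|exact (derivable_pt_lim_lincomb _ _ x _ _ _ _ _ dv di)].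
    field. split; lra. }
  assert (H2 : is_integral (clamp vp) (T / 2) T (F2 T - F2 (T / 2))).
  { apply (is_integral_FTC _ F2); [lra | intros; apply cv | intros; now apply continuity_pt_lincomb|].
    intros x Hx. destruct (second_half_ode x Hx) as [di dv].
    eapply derivable_pt_lim_val; [|exact (derivable_pt_lim_lincomb _ _ x _ _ _ _ _ dv di)].
    field. split; lra. }
  replace (Vdc / 2) with ((F1 (T / 2) - F1 0 + (F2 T - F2 (T / 2))) / T).
  - apply has_average_periodic; [exact HT | exact cv | intros; now apply clamp_periodic|].
    exact (is_integral_Chasles _ _ _ _ _ _ H1 H2).
  - unfold F1, F2. rewrite !clamp_id, Hi, (proj1 HT0), (proj2 HT0) by lra.
    replace (vp (T / 2)) with (Vdc - vp 0) by lra. field. lra.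
Qed.

(* [Vdc / 2] is the mean of [vp 0] and [vp (T / 2)], and [C vp' = ip]. *)
Lemma voltage_deviation_first_half M : (forall t, 0 <= t <= T / 2 -> Rabs (ip t) <= M) ->
  forall t, 0 < t < T / 2 -> Rabs (clamp vp t - Vdc / 2) <= M / C * (T / 2) / 2.
Proof.
  intros HM t Ht. destruct periodic_switched_sol as [_ [cv _]].
  destruct half_period_symmetry as [_ Hmid].
  assert (Hspeed : forall a b, 0 <= a <= b -> b <= T / 2 ->
    Rabs (clamp vp b - clamp vp a) <= M / C * (b - a)).
  { intros a b Hab Hb. apply (MVT_abs_le _ (fun x => clamp ip x / C)); [lra | intros; apply cv | |].
    - intros x Hx. apply first_half_ode. lra.
    - intros x Hx. unfold Rdiv. rewrite Rabs_mult, (Rabs_right (/ C)) by (apply Rle_ge, Rlt_le, Rinv_0_lt_compat; lra).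
      apply Rmult_le_compat_r; [apply Rlt_le, Rinv_0_lt_compat; lra|].
      rewrite clamp_id by lra. apply HM. lra. }
  assert (H0t := Hspeed 0 t ltac:(lra) ltac:(lra)).
  assert (Hth := Hspeed t (T / 2) ltac:(lra) ltac:(lra)).
  rewrite !clamp_id in H0t, Hth by lra. rewrite clamp_id by lra.
  replace (vp t - Vdc / 2) with (((vp t - vp 0) - (vp (T / 2) - vp t)) / 2) by lra.
  unfold Rdiv at 1. rewrite Rabs_mult, (Rabs_right (/ 2)) by lra.
  assert (Rabs (vp t - vp 0 - (vp (T / 2) - vp t)) <= M / C * (T / 2)); [|lra].
  unfold Rminus at 1. eapply Rle_trans; [apply Rabs_triang|]. rewrite Rabs_Ropp.
  replace (M / C * (T / 2)) with (M / C * (t - 0) + M / C * (T / 2 - t)) by ring. lra.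
Qed.

Lemma current_average_deviation_le M : (forall t, 0 <= t <= T / 2 -> Rabs (ip t) <= M) ->
  Rabs (2 * C / T * (Vdc - 2 * vp 0) - Vdc / (2 * Rr)) <= T / (2 * Rr * C) * M / 2.
Proof.
  intros HM. destruct periodic_switched_sol as [ci [cv _]].
  destruct half_period_symmetry as [Hi Hmid].
  (* [Phi (T / 2) - Phi 0] is the integral of [vp - Vdc / 2] over the first half-period. *)
  pose (Phi := fun t => Vdc / 2 * t + - (Rr * C) * clamp vp t + - L * clamp ip t).
  assert (HPhi : Rabs (Phi (T / 2) - Phi 0) <= M / C * (T / 2) / 2 * (T / 2 - 0)).
  { apply (MVT_abs_le Phi (fun t => clamp vp t - Vdc / 2));
      [lra | intros; now apply continuity_pt_lincomb | |].
    - intros x Hx. destruct (first_half_ode x Hx) as [di dv].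
      eapply derivable_pt_lim_val; [|exact (derivable_pt_lim_lincomb _ _ x _ _ _ _ _ dv di)].
      field. split; lra.
    - exact (voltage_deviation_first_half M HM). }
  assert (EPhi : 2 * C / T * (Vdc - 2 * vp 0) - Vdc / (2 * Rr)
                 = - (Phi (T / 2) - Phi 0) / (Rr * (T / 2))).
  { unfold Phi. rewrite !clamp_id, Hi by lra. replace (vp (T / 2)) with (Vdc - vp 0) by lra.
    field. lra. }
  rewrite EPhi. unfold Rdiv at 1.
  rewrite Rabs_mult, Rabs_Ropp, (Rabs_right (/ (Rr * (T / 2))))
    by (apply Rle_ge, Rlt_le, Rinv_0_lt_compat, Rmult_lt_0_compat; lra).
  replace (T / (2 * Rr * C) * M / 2) with (M / C * (T / 2) / 2 * (T / 2 - 0) * / (Rr * (T / 2)))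
    by (field; lra).
  apply Rmult_le_compat_r; [apply Rlt_le, Rinv_0_lt_compat, Rmult_lt_0_compat; lra | exact HPhi].
Qed.

Lemma current_average_deviation : exists t0, 0 <= t0 <= T / 2 /\
  (forall t, 0 <= t <= T / 2 -> Rabs (ip t) <= Rabs (ip t0)) /\
  Rabs (2 * C / T * (Vdc - 2 * vp 0) - Vdc / (2 * Rr)) <= T / (2 * Rr * C) * Rabs (ip t0).
Proof.
  destruct periodic_switched_sol as [ci _].
  destruct (continuity_ab_maj (fun t => Rabs (clamp ip t)) 0 (T / 2)) as [t0 [Hmax Ht0]]; [lra| |].
  { intros c _. apply (continuity_pt_comp (clamp ip) Rabs); [apply ci | apply Rcontinuity_abs]. }
  assert (Hmax' : forall t, 0 <= t <= T / 2 -> Rabs (ip t) <= Rabs (ip t0)).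
  { intros t Ht. rewrite <- (clamp_id ip t), <- (clamp_id ip t0) by lra. now apply Hmax. }
  exists t0. split; [exact Ht0|]. split; [exact Hmax'|].
  assert (Hdev := current_average_deviation_le _ Hmax').
  assert (0 <= T / (2 * Rr * C) * Rabs (ip t0)).
  { apply Rmult_le_pos; [|apply Rabs_pos].
    apply Rlt_le, Rdiv_lt_0_compat; [|apply Rmult_lt_0_compat]; nra. }
  lra.
Qed.

End Periodic.

Theorem theorem2 (Rr L C Vdc T : R) (i v ip vp : R -> R) :
  0 < Rr -> 0 < L -> 0 < C -> 0 < Vdc -> 0 < T ->
  is_solution Rr L C Vdc T i v ->
  is_periodic_solution Rr L C Vdc T ip vp ->
  has_average v ((vp 0 + vp (T / 2)) / 2) /\
  (vp 0 + vp (T / 2)) / 2 = Vdc / 2 /\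
  has_average i (2 * C / T * (Vdc - 2 * vp 0)) /\
  (exists t0, 0 <= t0 <= T / 2 /\
     (forall t, 0 <= t <= T / 2 -> Rabs (ip t) <= Rabs (ip t0)) /\
     Rabs (2 * C / T * (Vdc - 2 * vp 0) - Vdc / (2 * Rr))
       <= T / (2 * Rr * C) * Rabs (ip t0)).
Proof.
  intros HR HL HC _ HT Hsol Hper.
  destruct (half_period_symmetry Rr L C Vdc T ip vp HR HL HC HT Hper) as [_ Hmid].
  assert (Hs := switched_sol_clamp Rr L C Vdc T i v HL HT Hsol).
  assert (Hp := periodic_switched_sol Rr L C Vdc T ip vp HL HT Hper).
  destruct (state_vanishes Rr L C (T / 2) _ _ HR HL HC ltac:(lra)
              (switched_sol_sub _ _ _ _ _ _ _ _ _ HL Hs Hp)) as [Hvan_i Hvan_v].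
  destruct Hs as [ci [cv _]], Hp as [cip [cvp _]].
  split; [|split; [lra | split]].
  - apply (has_average_ext (clamp v)); [intros; now apply clamp_id|].
    replace ((vp 0 + vp (T / 2)) / 2) with (Vdc / 2) by lra.
    apply (has_average_tracking _ (clamp vp)); auto.
    now apply (voltage_average Rr L C Vdc T ip vp).
  - apply (has_average_ext (clamp i)); [intros; now apply clamp_id|].
    apply (has_average_tracking _ (clamp ip)); auto.
    now apply (current_average Rr L C Vdc T ip vp).
  - now apply (current_average_deviation Rr L C Vdc T ip vp).
Qed.
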